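(* Let $\mathbf S$ be a species and, for each $i\ge0$, let $a_i$ be the number of $\mathbf S$-structures on an $i$-element set. For integers $n,x\ge 0$ let $p_n(x)$ be the number of $\mathbf S$-enriched functions from an $n$-element set to an $x$-element set. Then, for all integers $n,x\ge0$, $$p_n(x)=\sum_{\lambda\vdash n}\binom{n}{\lambda}\,\frac{\prod_{i=1}^{\ell(\lambda)}a_{\lambda_i}}{\prod_{j\ge1}\mathrm{mult}_j(\lambda)!}\,(x)_{\ell(\lambda)}.$$
   Context: A species $\mathbf S$ is a functor from the category of finite sets and bijections to itself, with $|\mathbf S[\emptyset]|=1$ and $|\mathbf S[E]|\ge1$ whenever $|E|=1$. The number $a_i=|\mathbf S[E]|$ for $|E|=i$ depends only on $i$. An $\mathbf S$-enriched function from $N$ to $X$ is a pair $(f,(A_y)_{y\in X})$ where $f:N\to X$ and $A_y\in\mathbf S[f^{-1}(y)]$ for each $y\in X$. A partition $\lambda\vdash n$ is a nonincreasing, eventually zero sequence of nonnegative integers with sum $n$. Its length $\ell(\lambda)$ is its number of nonzero parts, and $\mathrm{mult}_j(\lambda)$ is the number of parts equal to $j$. We write $\binom{n}{\lambda}=n!/\prod_i\lambda_i!$ and $(x)_k=x(x-1)\cdots(x-k+1)$. *)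

From mathcomp Require Import all_boot all_algebra.
Set Implicit Arguments. Unset Strict Implicit. Unset Printing Implicit Defensive.
Import GRing.Theory Num.Theory.

(* A species: a functor from finite sets and bijections to finite sets,
   with |S[E]| = 1 for E empty and |S[E]| >= 1 for |E| = 1.
   Finite sets are modelled as finTypes, bijections as functions together
   with a proof of bijectivity. *)
Record species := Species {
  sp_obj :> finType -> finType;
  sp_map : forall (E F : finType) (f : E -> F), bijective f -> sp_obj E -> sp_obj F;
  sp_map_id : forall (E : finType) (h : bijective (@id E)) (s : sp_obj E),
      sp_map h s = s;
  sp_map_comp : forall (E F G : finType) (f : E -> F) (g : F -> G)
      (hf : bijective f) (hg : bijective g) (hgf : bijective (g \o f))
      (s : sp_obj E), sp_map hgf s = sp_map hg (sp_map hf s);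
  sp_empty : forall E : finType, #|E| = 0 -> #|sp_obj E| = 1;
  sp_single : forall E : finType, #|E| = 1 -> 0 < #|sp_obj E|
}.

Definition sp_count (S : species) (i : nat) : nat := #|S 'I_i|.

Definition fiber (N X : finType) (f : {ffun N -> X}) (y : X) : finType :=
  {i : N | f i == y}.

Definition enriched_fun (S : species) (N X : finType) : finType :=
  {f : {ffun N -> X} & {dffun forall y : X, S (fiber f y)}}.

Definition p_enr (S : species) (n x : nat) : nat :=
  #|enriched_fun S 'I_n 'I_x|.

(* A partition of n is represented by its first n parts
   lam 0 >= lam 1 >= ... >= lam (n-1) >= 0 (all further parts are 0,
   since a partition of n has at most n nonzero parts). *)
Definition is_partition (n : nat) (lam : {ffun 'I_n -> 'I_n.+1}) : bool :=
  [forall i : 'I_n, forall j : 'I_n, (i <= j)%N ==> (lam j <= lam i)%N]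
  && (\sum_(i < n) (lam i : nat) == n)%N.

Definition ell (n : nat) (lam : {ffun 'I_n -> 'I_n.+1}) : nat :=
  #|[set i | (lam i : nat) != 0%N]|.

Definition mult (n : nat) (lam : {ffun 'I_n -> 'I_n.+1}) (j : nat) : nat :=
  #|[set i | (lam i : nat) == j]|.

(* An S-enriched function is a map f : [n] -> [x] with an S-structure on each
   fibre, and |S[E]| depends only on |E|, so p_n(x) is the sum over f of
   prod_y a_{|f^-1(y)|}.  This weight only depends on the type of f, the
   partition lam formed by its nonzero fibre sizes.  The fibre-size vectors of
   type lam are the arrangements of the parts of lam and of x - l zeros
   (l = l(lam)), so there are x! / ((x - l)! prod_j mult_j(lam)!)
   = (x)_l / prod_j mult_j(lam)! of them, and each is the fibre-size vector of
   n! / prod_i lam_i! functions (both counts are multinomial coefficients). *)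

From mathcomp Require Import all_boot all_algebra.
From mathcomp Require Import ring.
From Stdlib Require Import FunctionalExtensionality.
Import GRing.Theory Num.Theory.
Set Implicit Arguments. Unset Strict Implicit. Unset Printing Implicit Defensive.

Section SpeciesCard.
Variable S : species.

Lemma sp_mapK (E F : finType) (h : E -> F) (g : F -> E)
    (bh : bijective h) (bg : bijective g) :
  cancel h g -> cancel (@sp_map S _ _ h bh) (@sp_map S _ _ g bg).
Proof.
move=> hK s; have bgh : bijective (g \o h) by exists id => e /=; rewrite hK.
rewrite -(sp_map_comp bh bg bgh); move: bgh.
have -> : g \o h = id by apply: functional_extensionality => e; exact: hK.
by move=> bid; apply: sp_map_id.
Qed.

Lemma card_sp (E : finType) : #|S E| = sp_count S #|E|.
Proof.
apply: (bij_eq_card (f := @sp_map S _ _ _ (enum_rank_bij E))).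
by exists (@sp_map S _ _ _ (enum_val_bij E)); apply: sp_mapK;
  [exact: enum_rankK | exact: enum_valK].
Qed.

Lemma sp_count0 : sp_count S 0 = 1.
Proof. by rewrite /sp_count sp_empty ?card_ord. Qed.

End SpeciesCard.

Definition fiber_card (N X : finType) (f : N -> X) (y : X) : nat :=
  #|[pred i | f i == y]|.

Lemma card_count_codom (A : finType) (B : Type) (f : A -> B) (P : pred B) :
  #|[pred a | P (f a)]| = count P (codom f).
Proof. by rewrite codomE count_map cardE -size_filter enumT. Qed.

Lemma fiber_card_codom (A B : finType) (f : A -> B) y :
  fiber_card f y = count_mem y (codom f).
Proof. exact: card_count_codom f (pred1 y). Qed.

Lemma codom_finfun_of_tuple (T : Type) N (t : N.-tuple T) : codom (finfun_of_tuple t) = t.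
Proof. by rewrite codomE (eq_map (ffunE _)) map_tnth_enum. Qed.

Lemma sum_fiber_card (N X : finType) (f : N -> X) : \sum_y fiber_card f y = #|N|.
Proof.
rewrite -sum1_card (partition_big f predT) //.
by apply: eq_bigr => y _; rewrite sum1_card.
Qed.

Lemma p_enrE (S : species) n x :
  p_enr S n x = \sum_(f : {ffun 'I_n -> 'I_x}) \prod_y sp_count S (fiber_card f y).
Proof.
rewrite /p_enr /enriched_fun card_tagged sumnE big_map big_enum /=.
apply: eq_bigr => f _; rewrite card_dep_ffun foldrE big_map big_enum /=.
by apply: eq_bigr => y _; rewrite card_sp /fiber card_sig.
Qed.

Section Multinomial.
Variable T : finType.

Lemma card_tuple_cons N (P : pred (N.+1.-tuple T)) :
  #|[pred t | P t]| = \sum_k #|[pred t : N.-tuple T | P [tuple of k :: t]]|.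
Proof.
rewrite -sum1_card (reindex (fun p : T * N.-tuple T => [tuple of p.1 :: p.2])) /=.
  rewrite -(pair_big_dep predT (fun (k : T) (t : N.-tuple T) => P [tuple of k :: t])
                          (fun _ _ => 1)) /=.
  by apply: eq_bigr => k _; rewrite sum1_card.
exists (fun t => (thead t, [tuple of behead t])) => [[k t] _ | t _].
  by congr pair; apply: val_inj.
by apply: val_inj; rewrite /= [in RHS](tuple_eta t).
Qed.

Lemma card_tuple_count N (m : T -> nat) : \sum_k m k = N ->
  #|[pred t : N.-tuple T | [forall k, count_mem k t == m k]]| * \prod_k (m k)`! = N`!.
Proof.
elim: N m => [|N IHN] m sum_m.
  have m0 k : m k = 0 by apply/eqP; move/eqP: sum_m; rewrite sum_nat_eq0 => /forallP/(_ k).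
  rewrite big1 ?muln1 => [|k _]; last by rewrite m0.
  rewrite fact0 -(expn0 #|T|) -(card_tuple 0 T); apply: eq_card => t.
  by rewrite tuple0 !inE; apply/forallP => k; rewrite m0.
have -> : N.+1`! = \sum_k m k * N`! by rewrite -big_distrl /= sum_m factS.
rewrite card_tuple_cons big_distrl /=.
apply: eq_bigr => k _; case m_k: (m k) => [|p].
  rewrite eq_card0 // => t; rewrite !inE; apply/forallP => /(_ k) /=.
  by rewrite eqxx m_k.
pose m' k' := m k' - (k == k').
have m'E k' : k' != k -> m' k' = m k' by rewrite /m' eq_sym => /negbTE ->; rewrite subn0.
have m'k : m' k = p by rewrite /m' eqxx m_k subn1.
have sum_m' : \sum_k' m' k' = N.
  apply: succn_inj; rewrite -sum_m (bigD1 k) // [in RHS](bigD1 k) //= m'k m_k addSn.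
  by under eq_bigr => k' /m'E -> do [].
have prod_m : \prod_k' (m k')`! = p.+1 * \prod_k' (m' k')`!.
  rewrite (bigD1 k) // [in RHS](bigD1 k) //= m_k m'k factS -mulnA.
  by under eq_bigr => k' /m'E <- do [].
rewrite prod_m mulnCA -(IHN m' sum_m'); congr (_ * (_ * _)); apply: eq_card => t.
rewrite !inE; apply: eq_forallb => k'; rewrite /m'.
by case: (k =P k') => [<-|_]; [rewrite m_k add1n eqSS subn1 | rewrite add0n subn0].
Qed.

Lemma card_ffun_fiber_card N (m : T -> nat) : \sum_k m k = N ->
  #|[pred w : {ffun 'I_N -> T} | [forall k, fiber_card w k == m k]]| * \prod_k (m k)`!
    = N`!.
Proof.
move=> sum_m; rewrite -(card_tuple_count sum_m); congr (_ * _).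
rewrite -!sum1_card (reindex (@finfun_of_tuple T N)) /=; last first.
  by exists (@tuple_of_finfun T N) => t _; rewrite ?finfun_of_tupleK ?tuple_of_finfunK.
apply: eq_bigl => t; rewrite !inE; apply: eq_forallb => k.
by rewrite fiber_card_codom codom_finfun_of_tuple.
Qed.
End Multinomial.

Section Values.
Variables (X : finType) (m : nat).
Implicit Types c : {ffun X -> 'I_m}.

Definition values c : seq nat := codom (fun y => (c y : nat)).

Definition parts c : seq nat := [seq v <- values c | v != 0].

Lemma count_values c (P : pred nat) : count P (values c) = #|[pred y | P (c y)]|.
Proof. by rewrite card_count_codom. Qed.

Lemma size_parts c : size (parts c) = #|[pred y | (c y : nat) != 0]|.
Proof. by rewrite size_filter count_values. Qed.

Lemma count_parts c j : j != 0 -> count_mem j (parts c) = #|[pred y | (c y : nat) == j]|.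
Proof.
move=> j0; rewrite count_filter count_values; apply: eq_card => y /=.
by rewrite !inE; case: eqP => // ->; rewrite j0.
Qed.

Lemma zero_notin_parts c : 0 \notin parts c.
Proof. by rewrite mem_filter eqxx. Qed.

Lemma big_parts (R : Type) (idx : R) (op : Monoid.com_law idx) (F : nat -> R) c :
  F 0 = idx -> \big[op/idx]_(v <- parts c) F v = \big[op/idx]_y F (c y).
Proof.
move=> F0; rewrite big_filter big_mkcond /values codomE big_map big_enum /=.
by apply: eq_bigr => y _; case: eqP => // ->.
Qed.

Lemma sumn_parts c : sumn (parts c) = \sum_y c y.
Proof. by rewrite sumnE big_parts. Qed.

End Values.

Lemma perm_nonzero (s t : seq nat) : size s = size t ->
  perm_eq [seq v <- s | v != 0] [seq v <- t | v != 0] -> perm_eq s t.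
Proof.
move=> eq_size eq_nz; apply/allP => v _; apply/eqP.
have [->|v0] := eqVneq v 0.
  have count0 u : count_mem 0 u = size u - size [seq w <- u | w != 0].
    by rewrite size_filter -(count_predC (pred1 0) u) addnK.
  by rewrite !count0 eq_size (perm_size eq_nz).
have count_nz u : count_mem v u = count_mem v [seq w <- u | w != 0].
  by rewrite count_filter; apply: eq_count => w /=; case: eqP => // ->; rewrite v0.
by rewrite (count_nz s) (count_nz t) (permP eq_nz).
Qed.

Lemma mem_leq_sumn (s : seq nat) v : v \in s -> v <= sumn s.
Proof.
elim: s => //= w s IHs; rewrite inE => /predU1P [->|/IHs le_vs]; first exact: leq_addr.
exact: leq_trans le_vs (leq_addl w _).
Qed.

Lemma size_leq_sumn (s : seq nat) : 0 \notin s -> size s <= sumn s.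
Proof.
elim: s => //= v s IHs; rewrite inE negb_or eq_sym -lt0n => /andP [v_gt0 /IHs].
by rewrite -add1n; apply: leq_add.
Qed.

Lemma geq_trans : transitive geq.
Proof. exact: rev_trans leq_trans. Qed.

Section Partitions.
Variable n : nat.
Implicit Types lam mu : {ffun 'I_n -> 'I_n.+1}.

Lemma size_values lam : size (values lam) = n.
Proof. by rewrite size_codom card_ord. Qed.

Lemma nth_values lam (i : 'I_n) : nth 0 (values lam) i = lam i.
Proof. by rewrite /values codomE (nth_map i) ?size_enum_ord // nth_ord_enum. Qed.

Lemma values_inj : injective (@values _ n.+1 : {ffun 'I_n -> 'I_n.+1} -> seq nat).
Proof.
move=> lam mu eq_lam_mu; apply/ffunP => i; apply: val_inj.
by rewrite /= -!nth_values eq_lam_mu.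
Qed.

Lemma partition_sorted lam : is_partition lam -> sorted geq (values lam).
Proof.
case/andP => /forallP lam_dec _; apply/(sortedP 0) => i; rewrite size_values => lt_i1n.
have lt_in := ltnW lt_i1n.
move/forallP/(_ (Ordinal lt_i1n))/implyP: (lam_dec (Ordinal lt_in)).
by rewrite -!nth_values /=; apply.
Qed.

Lemma partition_inj lam mu : is_partition lam -> is_partition mu ->
  perm_eq (parts lam) (parts mu) -> lam = mu.
Proof.
move=> lam_part mu_part eq_parts; apply: values_inj.
apply: (sorted_eq geq_trans) (partition_sorted lam_part) (partition_sorted mu_part) _.
  by move=> u v /andP [le_vu le_uv]; apply/anti_leq/andP.
by apply: perm_nonzero; rewrite ?size_values.
Qed.

Lemma partition_of_parts (Q : seq nat) : 0 \notin Q -> sumn Q = n ->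
  exists2 lam : {ffun 'I_n -> 'I_n.+1}, is_partition lam & perm_eq (parts lam) Q.
Proof.
move=> Q0 sumQ; set q := sort geq Q.
have perm_qQ : perm_eq q Q := permEl (perm_sort geq Q).
have q_sorted : sorted geq q by apply: sort_sorted => u v; apply: leq_total.
have sumq : sumn q = n by rewrite (perm_sumn perm_qQ).
have size_q : size q <= n by rewrite -sumq size_leq_sumn ?(perm_mem perm_qQ).
have q_le i : nth 0 q i <= n.
  by have [/(mem_nth 0)/mem_leq_sumn|/(nth_default 0)->] := ltnP i (size q); rewrite ?sumq.
pose lam : {ffun 'I_n -> 'I_n.+1} := [ffun i : 'I_n => inord (nth 0 q i)].
have lamE i : lam i = nth 0 q i :> nat by rewrite ffunE inordK // ltnS.
have values_lam : values lam = q ++ nseq (n - size q) 0.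
  apply: (@eq_from_nth _ 0) => [|i]; rewrite size_values ?size_cat ?size_nseq ?subnKC // => lt_in.
  rewrite -[i]/(nat_of_ord (Ordinal lt_in)) nth_values lamE nth_cat nth_nseq /=.
  by case: ltnP => // /(nth_default 0) ->; case: ifP.
have parts_lam : parts lam = q.
  rewrite /parts values_lam filter_cat filter_nseq /= cats0; apply/all_filterP/allP => v.
  by apply: contraTneq => ->; rewrite (perm_mem perm_qQ).
exists lam; last by rewrite parts_lam.
apply/andP; split; last by rewrite -sumn_parts parts_lam sumq.
apply/forallP => i; apply/forallP => j; apply/implyP => le_ij; rewrite !lamE.
have [lt_jq|/(nth_default 0)-> //] := ltnP j (size q).
apply: (sorted_leq_nth geq_trans leqnn 0 q_sorted) => //; exact: leq_ltn_trans le_ij lt_jq.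
Qed.

Lemma ell_parts lam : ell lam = size (parts lam).
Proof. by rewrite /ell size_parts cardsE. Qed.

Lemma mult_parts lam j : j != 0 -> mult lam j = count_mem j (parts lam).
Proof. by move=> j0; rewrite /mult count_parts // cardsE. Qed.

Lemma partition_lt_ell lam (i : 'I_n) : is_partition lam -> (lam i : nat) != 0 -> i < ell lam.
Proof.
case/andP => /forallP lam_dec _ lam_i0.
have card_le_i : #|[set j : 'I_n | j <= i]| = i.+1.
  rewrite -sum1_card (eq_bigl (fun j : 'I_n => j < i.+1)) => [|j]; last by rewrite inE.
  by rewrite (big_ord_narrow (ltn_ord i)) sum1_card card_ord.
rewrite -card_le_i /ell; apply/subset_leq_card/subsetP => j; rewrite !inE => le_ji.
apply: contraNneq lam_i0 => lam_j0.
by move/forallP/(_ i)/implyP/(_ le_ji): (lam_dec j); rewrite lam_j0 leqn0.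
Qed.

End Partitions.

(* [f] has type [lam] when [perm_eq (parts (fiber_cards f)) (parts lam)]. *)
Definition fiber_cards n (X : finType) (f : {ffun 'I_n -> X}) : {ffun X -> 'I_n.+1} :=
  [ffun y => inord (fiber_card f y)].

Section FiberCards.
Variables (n : nat) (X : finType).
Implicit Types f : {ffun 'I_n -> X}.

Lemma fiber_cardsE f y : fiber_cards f y = fiber_card f y :> nat.
Proof. by rewrite ffunE inordK // ltnS -[n in _ <= n]card_ord max_card. Qed.

Lemma eq_fiber_cards f c : (fiber_cards f == c) = [forall y, fiber_card f y == c y].
Proof.
apply/eqP/forallP => [<- y | eq_fc]; first by rewrite fiber_cardsE.
by apply/ffunP => y; apply: val_inj; rewrite /= fiber_cardsE; apply/eqP.
Qed.

Lemma sumn_parts_fiber_cards f : sumn (parts (fiber_cards f)) = n.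
Proof.
by rewrite sumn_parts (eq_bigr _ (fun y _ => fiber_cardsE f y)) sum_fiber_card card_ord.
Qed.

End FiberCards.

Lemma sum_count_mem_ord n (Q : seq nat) : 0 \notin Q -> all (leq^~ n) Q ->
  \sum_(j < n) count_mem j.+1 Q = size Q.
Proof.
elim: Q => [|v Q IHQ]; first by rewrite big1.
rewrite inE negb_or eq_sym => /andP [v0 Q0] /andP [le_vn Q_le].
rewrite big_split /= IHQ // -add1n; congr (_ + _).
case: v v0 le_vn => // v _ lt_vn.
rewrite (bigD1 (Ordinal lt_vn)) //= eqxx big1 // => j neq_jv.
by rewrite eqSS; case: eqP => // eq_vj; case/eqP: neq_jv; apply: val_inj; rewrite /= eq_vj.
Qed.

Lemma perm_partsP x n (Q : seq nat) (c : {ffun 'I_x -> 'I_n.+1}) :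
    0 \notin Q -> all (leq^~ n) Q ->
  reflect (forall j : 'I_n.+1, (j : nat) != 0 -> fiber_card c j = count_mem (j : nat) Q)
          (perm_eq (parts c) Q).
Proof.
have fiber_parts (j : 'I_n.+1) : (j : nat) != 0 -> fiber_card c j = count_mem (j : nat) (parts c).
  by move=> j0; rewrite count_parts //; apply: eq_card => y; rewrite !inE.
move=> Q0 Q_le; apply: (iffP idP) => [type_c j j0 | fiber_c].
  by rewrite fiber_parts // (permP type_c).
apply/allP => v _; apply/eqP; have [->|v0] := eqVneq v 0.
  by rewrite !(count_memPn _) ?zero_notin_parts.
have [le_vn|lt_nv] := leqP v n.
  by rewrite -[v]/(nat_of_ord (Ordinal (le_vn : v < n.+1))) -fiber_parts ?fiber_c.
have vNQ : v \notin Q by apply: contraL lt_nv => /(allP Q_le); rewrite leqNgt.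
have vNc : v \notin parts c.
  rewrite mem_filter negb_and; apply/orP; right; apply: contraL lt_nv => /codomP [y ->].
  by rewrite -leqNgt -ltnS.
by rewrite (count_memPn vNQ) (count_memPn vNc).
Qed.

Lemma card_vectors_of_type x n (Q : seq nat) : 0 \notin Q -> all (leq^~ n) Q ->
  #|[pred c : {ffun 'I_x -> 'I_n.+1} | perm_eq (parts c) Q]|
    * \prod_(j < n) (count_mem j.+1 Q)`! = x ^_ size Q.
Proof.
move=> Q0 Q_le; have [le_Qx|lt_xQ] := leqP (size Q) x; last first.
  rewrite ffact_small // eq_card0 // => c; rewrite !inE; apply: contraTF lt_xQ.
  by move/perm_size <-; rewrite size_parts -leqNgt -[x in _ <= x]card_ord max_card.
pose m (j : 'I_n.+1) := if j == 0 :> nat then x - size Q else count_mem (j : nat) Q.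
have sum_m : \sum_j m j = x by rewrite big_ord_recl sum_count_mem_ord // subnK.
have prod_m : \prod_j (m j)`! = (x - size Q)`! * \prod_(j < n) (count_mem j.+1 Q)`!.
  by rewrite big_ord_recl.
have type_m : [pred c : {ffun 'I_x -> 'I_n.+1} | perm_eq (parts c) Q]
             =i [pred c : {ffun 'I_x -> 'I_n.+1} | [forall j, fiber_card c j == m j]].
  move=> c; rewrite !inE; apply/idP/forallP => [type_c j | fiber_c].
    rewrite /m; case: ifP => [/eqP j0 | /negbT j0]; last first.
      by move/(perm_partsP c Q0 Q_le): type_c => ->.
    have card_c : fiber_card c j + #|[pred y | (c y : nat) != 0]| = x.
      rewrite -[RHS](card_ord x) -(cardC [pred y | c y == j]); congr (_ + _).
      by apply: eq_card => y; rewrite !inE -j0.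
    by rewrite -(perm_size type_c) size_parts; apply/eqP/(canRL (addnK _)).
  apply/(perm_partsP c Q0 Q_le) => j j0.
  by move/eqP: (fiber_c j); rewrite /m (negbTE j0).
apply/eqP; rewrite -(eqn_pmul2r (fact_gt0 (x - size Q))) -mulnA [_ * (x - size Q)`!]mulnC.
by rewrite -prod_m (eq_card type_m) card_ffun_fiber_card // ffact_fact.
Qed.

Lemma card_functions_of_type n x (Q : seq nat) : 0 \notin Q -> sumn Q = n ->
  #|[pred f : {ffun 'I_n -> 'I_x} | perm_eq (parts (fiber_cards f)) Q]|
    * \prod_(v <- Q) v`! * \prod_(j < n) (count_mem j.+1 Q)`! = n`! * x ^_ size Q.
Proof.
move=> Q0 sumQ; have Q_le : all (leq^~ n) Q.
  by apply/allP => v /mem_leq_sumn; rewrite sumQ.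
rewrite -(card_vectors_of_type x Q0 Q_le) mulnA; congr (_ * _).
rewrite -sum1_card (partition_big (@fiber_cards n _) (fun c => perm_eq (parts c) Q)) //=.
rewrite big_distrl /= mulnC -sum_nat_const; apply: eq_big => [c | c type_c]; first by rewrite inE.
have sum_c : \sum_y (c y : nat) = n by rewrite -sumn_parts (perm_sumn type_c).
rewrite -(card_ffun_fiber_card sum_c) sum1_card -(perm_big _ type_c) big_parts //.
congr (_ * _); apply: eq_card => f; rewrite unfold_in /= !inE -eq_fiber_cards.
by rewrite andb_idl // => /eqP ->.
Qed.

Lemma sum_fibers_by_partition n x (a : nat -> nat) : a 0 = 1 ->
  \sum_(f : {ffun 'I_n -> 'I_x}) \prod_y a (fiber_card f y) =
  \sum_(lam : {ffun 'I_n -> 'I_n.+1} | is_partition lam)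
    #|[pred f : {ffun 'I_n -> 'I_x} | perm_eq (parts (fiber_cards f)) (parts lam)]|
      * \prod_(v <- parts lam) a v.
Proof.
move=> a0; pose of_type (f : {ffun 'I_n -> 'I_x}) (lam : {ffun 'I_n -> 'I_n.+1}) :=
  is_partition lam && perm_eq (parts (fiber_cards f)) (parts lam).
transitivity (\sum_f \sum_(lam | of_type f lam) \prod_(v <- parts lam) a v).
  apply: eq_bigr => f _.
  have [lam lam_part type_f] := partition_of_parts (zero_notin_parts (fiber_cards f))
                                                 (sumn_parts_fiber_cards f).
  rewrite (big_pred1 lam) => [|mu]; last first.
    apply/andP/eqP => [[mu_part type_mu] | ->]; last by rewrite perm_sym.
    by apply: partition_inj => //; rewrite perm_sym (perm_trans type_f type_mu).
  rewrite (perm_big _ type_f) big_parts //.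
  by apply: eq_bigr => y _; rewrite fiber_cardsE.
rewrite (exchange_big_dep (@is_partition n)) => [|f lam _ /andP [] //].
apply: eq_bigr => lam lam_part; rewrite -sum_nat_const; apply: eq_bigl => f.
by rewrite /of_type lam_part inE.
Qed.

Lemma prod_lt_ell n (lam : {ffun 'I_n -> 'I_n.+1}) (F : nat -> nat) :
  is_partition lam -> F 0 = 1 ->
  \prod_(i < n | i < ell lam) F (lam i) = \prod_(v <- parts lam) F v.
Proof.
move=> lam_part F0; rewrite big_parts // big_mkcond; apply: eq_bigr => i _.
case: ifP => // /negbT i_ge_ell; suff -> : (lam i : nat) = 0 by rewrite F0.
exact/eqP/(contraNT (partition_lt_ell lam_part) i_ge_ell).
Qed.

Local Open Scope ring_scope.

Lemma weighted_count_of_type n x (a : nat -> nat) (lam : {ffun 'I_n -> 'I_n.+1}) :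
    is_partition lam -> a 0%N = 1%N ->
  (#|[pred f : {ffun 'I_n -> 'I_x} | perm_eq (parts (fiber_cards f)) (parts lam)]|
     * \prod_(v <- parts lam) a v)%:R =
  ((n`!)%:R / (\prod_(i < n) ((lam i : nat)`!)%:R)) *
  ((\prod_(i < n | (i < ell lam)%N) a (lam i))%:R /
     (\prod_(1 <= j < n.+1) ((mult lam j)`!)%:R)) *
  (x ^_ (ell lam))%:R :> rat.
Proof.
move=> lam_part a0.
have sum_parts : sumn (parts lam) = n by rewrite sumn_parts; case/andP: lam_part => _ /eqP.
have prod_mult : (\prod_(1 <= j < n.+1) (mult lam j)`!
                   = \prod_(j < n) (count_mem j.+1 (parts lam))`!)%N.
  by rewrite big_add1 big_mkord; apply: eq_bigr => j _; rewrite mult_parts.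
rewrite -!natr_prod (prod_lt_ell lam_part a0) prod_mult ell_parts.
rewrite -[(\prod_i (lam i)`!)%N](big_parts _ lam) //.
move: (card_functions_of_type x (zero_notin_parts lam) sum_parts).
move/(congr1 (GRing.natmul (1 : rat))); rewrite !natrM => counting.
have prod_fact_neq0 (I : Type) (r : seq I) (F : I -> nat) :
    (\prod_(i <- r) (F i)`!)%:R != 0 :> rat.
  by rewrite pnatr_eq0 -lt0n prodn_gt0 // => i; rewrite fact_gt0.
have clear_denominators (N L M A X : rat) : L != 0 -> M != 0 ->
    N * L * M = n`!%:R * X -> N * A = n`!%:R / L * (A / M) * X.
  move=> L0 M0 NLM.
  have -> : n`!%:R / L * (A / M) * X = n`!%:R * X * A / (L * M) by field; rewrite L0 M0.
  by rewrite -NLM; field; rewrite L0 M0.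
by apply: clear_denominators counting; exact: prod_fact_neq0.
Qed.

Theorem mainTheorem2 (S : species) (n x : nat) :
  (p_enr S n x)%:R =
  \sum_(lam : {ffun 'I_n -> 'I_n.+1} | is_partition lam)
     ((n`!)%:R / (\prod_(i < n) ((lam i : nat)`!)%:R)) *
     ((\prod_(i < n | (i < ell lam)%N) sp_count S (lam i))%:R /
        (\prod_(1 <= j < n.+1) ((mult lam j)`!)%:R)) *
     (x ^_ (ell lam))%:R :> rat.
Proof.
rewrite p_enrE (sum_fibers_by_partition _ _ (sp_count0 S)) natr_sum.
by apply: eq_bigr => lam lam_part; apply: weighted_count_of_type; last exact: sp_count0.
Qed.
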